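(* Let $G$ be a multiplicative monoid with identity, let $N$ be a $G$-graded near-ring and $P$ a graded ideal of $N$. If $P$ is a graded weakly prime ideal of $N$ and $(\{0\}:P)\subseteq P$, then $P$ is a graded prime ideal of $N$.
   Context: A near-ring $(N,+,\cdot)$ is a set with two binary operations such that $(N,+)$ is a group (not necessarily abelian), $(N,\cdot)$ is a semigroup, and $(a+b)y = ay+by$ for all $a,b,y\in N$. For a multiplicative monoid $G$ with identity, $N$ is a $G$-graded near-ring if there is a family $\{N_\sigma\}_{\sigma\in G}$ of additive normal subgroups of $N$ with $N=\bigoplus_{\sigma\in G}N_\sigma$ and $N_\sigma N_\tau\subseteq N_{\sigma\tau}$. An ideal $P$ is graded if $P=\bigoplus_{\sigma}(P\cap N_\sigma)$. For subsets $A,B$, $(A:B)=\{t\in N: tB\subseteq A\}$. For ideals $I,J$, $IJ$ denotes their product. A graded ideal $P$ is graded prime if for all graded ideals $I,J$ with $IJ\subseteq P$, either $I\subseteq P$ or $J\subseteq P$; graded weakly prime if the same holds whenever $\{0\}\neq IJ\subseteq P$. *)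

From Stdlib Require Import List.
Import ListNotations.

Record monoid := Monoid {
  mcarrier :> Type;
  mmul : mcarrier -> mcarrier -> mcarrier;
  mone : mcarrier;
  mmul_assoc : forall a b c, mmul a (mmul b c) = mmul (mmul a b) c;
  mmul_1l : forall a, mmul mone a = a;
  mmul_1r : forall a, mmul a mone = a
}.

Record nearring := NearRing {
  ncarrier :> Type;
  nadd : ncarrier -> ncarrier -> ncarrier;
  nzero : ncarrier;
  nopp : ncarrier -> ncarrier;
  nmul : ncarrier -> ncarrier -> ncarrier;
  nadd_assoc : forall a b c, nadd a (nadd b c) = nadd (nadd a b) c;
  nadd_0l : forall a, nadd nzero a = a;
  nadd_0r : forall a, nadd a nzero = a;
  nadd_oppl : forall a, nadd (nopp a) a = nzero;
  nadd_oppr : forall a, nadd a (nopp a) = nzero;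
  nmul_assoc : forall a b c, nmul a (nmul b c) = nmul (nmul a b) c;
  nmulDl : forall a b y, nmul (nadd a b) y = nadd (nmul a y) (nmul b y)
}.

Arguments nadd {n}.
Arguments nzero {n}.
Arguments nopp {n}.
Arguments nmul {n}.

Section Defs.
Variable N : nearring.

Definition subset (A B : N -> Prop) : Prop := forall x, A x -> B x.

Definition normal_subgroup (S : N -> Prop) : Prop :=
  S nzero /\
  (forall x y, S x -> S y -> S (nadd x y)) /\
  (forall x, S x -> S (nopp x)) /\
  (forall x y, S x -> S (nadd (nadd y x) (nopp y))).

Definition is_ideal (I : N -> Prop) : Prop :=
  normal_subgroup I /\
  (forall i n, I i -> I (nmul i n)) /\
  (forall i n m, I i -> I (nadd (nmul n (nadd m i)) (nopp (nmul n m)))).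

Definition sumlist (l : list N) : N := fold_right nadd nzero l.

Definition prod_set (I J : N -> Prop) : N -> Prop :=
  fun x => exists i j, I i /\ J j /\ x = nmul i j.

Definition colon (A B : N -> Prop) : N -> Prop :=
  fun t => forall b, B b -> A (nmul t b).

Definition zero_set : N -> Prop := fun x => x = nzero.

Variable G : monoid.

(* The direct sum: every element is a finite sum of homogeneous elements of
   pairwise distinct degrees, and such a sum is zero only if all summands are. *)
Definition is_grading (Ns : G -> N -> Prop) : Prop :=
  (forall s, normal_subgroup (Ns s)) /\
  (forall s t x y, Ns s x -> Ns t y -> Ns (mmul G s t) (nmul x y)) /\
  (forall x, exists l : list (G * N),
      NoDup (map fst l) /\ Forall (fun p => Ns (fst p) (snd p)) l /\
      x = sumlist (map snd l)) /\
  (forall l : list (G * N),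
      NoDup (map fst l) -> Forall (fun p => Ns (fst p) (snd p)) l ->
      sumlist (map snd l) = nzero -> Forall (fun p => snd p = nzero) l).

(* P = ⊕_σ (P ∩ N_σ) *)
Definition graded_ideal (Ns : G -> N -> Prop) (P : N -> Prop) : Prop :=
  is_ideal P /\
  (forall x, P x -> exists l : list (G * N),
      NoDup (map fst l) /\ Forall (fun p => Ns (fst p) (snd p) /\ P (snd p)) l /\
      x = sumlist (map snd l)).

Definition graded_prime (Ns : G -> N -> Prop) (P : N -> Prop) : Prop :=
  graded_ideal Ns P /\
  forall I J, graded_ideal Ns I -> graded_ideal Ns J ->
    subset (prod_set I J) P -> subset I P \/ subset J P.

Definition graded_weakly_prime (Ns : G -> N -> Prop) (P : N -> Prop) : Prop :=
  graded_ideal Ns P /\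
  forall I J, graded_ideal Ns I -> graded_ideal Ns J ->
    ~ (forall x, prod_set I J x <-> zero_set x) ->
    subset (prod_set I J) P -> subset I P \/ subset J P.

End Defs.

Arguments subset {N}.
Arguments prod_set {N}.
Arguments colon {N}.
Arguments zero_set {N}.
Arguments is_grading {N G}.
Arguments graded_ideal {N G}.
Arguments graded_prime {N G}.
Arguments graded_weakly_prime {N G}.

(** If [IJ ⊆ P] with [IJ ≠ 0], weak primeness applies directly.  If [IJ = 0],
    the ideal axiom [n(m + p) - nm ∈ P] gives [i(j + p) = i(j + p) - ij ∈ P], so
    [I(J + P) ⊆ P].  Either [I(J + P) = 0], so [IP = 0] and
    [I ⊆ (0 : P) ⊆ P], or weak primeness applied to [I] and the graded ideal
    [J + P] gives [I ⊆ P] or [J ⊆ J + P ⊆ P].  The sum [J + P] is graded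
    because homogeneous elements of distinct degrees commute: their commutator
    lies in two components of the direct sum, hence is zero. *)

From Stdlib Require Import List Classical.
Import ListNotations.

Section NearRingAdditive.
Variable N : nearring.
Implicit Types a b : N.

Lemma nadd_oppl_cancel a b : nadd (nopp a) (nadd a b) = b.
Proof. rewrite nadd_assoc, nadd_oppl, nadd_0l. reflexivity. Qed.

Lemma nadd_oppr_cancel a b : nadd a (nadd (nopp a) b) = b.
Proof. rewrite nadd_assoc, nadd_oppr, nadd_0l. reflexivity. Qed.

Lemma nopp_unique_r a b : nadd a b = nzero -> b = nopp a.
Proof.
  intro Hab. rewrite <- (nadd_oppl_cancel a b), Hab, nadd_0r. reflexivity.
Qed.

Lemma nopp_unique_l a b : nadd a b = nzero -> a = nopp b.
Proof.
  intro Hab.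
  rewrite <- (nadd_0r N a), <- (nadd_oppr N b), nadd_assoc, Hab, nadd_0l.
  reflexivity.
Qed.

Lemma nopp_involutive a : nopp (nopp a) = a.
Proof. symmetry. apply nopp_unique_l, nadd_oppr. Qed.

Lemma nopp_nadd a b : nopp (nadd a b) = nadd (nopp b) (nopp a).
Proof.
  symmetry. apply nopp_unique_r.
  rewrite <- nadd_assoc, (nadd_assoc _ b), nadd_oppr, nadd_0l, nadd_oppr.
  reflexivity.
Qed.

Lemma nopp_0 : nopp (@nzero N) = nzero.
Proof. symmetry. apply nopp_unique_r, nadd_0l. Qed.

Lemma sumlist_app (l1 l2 : list N) :
  sumlist N (l1 ++ l2) = nadd (sumlist N l1) (sumlist N l2).
Proof.
  induction l1 as [|x l1 IH]; simpl.
  - rewrite nadd_0l. reflexivity.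
  - unfold sumlist in *. simpl. rewrite IH, nadd_assoc. reflexivity.
Qed.

Definition add_set (J P : N -> Prop) : N -> Prop :=
  fun x => exists j p, J j /\ P p /\ x = nadd j p.

Lemma add_set_l (J P : N -> Prop) j : P nzero -> J j -> add_set J P j.
Proof. intros P0 Hj. exists j, nzero. rewrite nadd_0r. auto. Qed.

Lemma add_set_r (J P : N -> Prop) p : J nzero -> P p -> add_set J P p.
Proof. intros J0 Hp. exists nzero, p. rewrite nadd_0l. auto. Qed.

Lemma add_set_normal_subgroup (J P : N -> Prop) :
  normal_subgroup N J -> normal_subgroup N P -> normal_subgroup N (add_set J P).
Proof.
  intros [J0 [JD [JO JN]]] [P0 [PD [PO PN]]].
  split; [|split; [|split]].
  - apply add_set_l; auto.
  - intros x y [j1 [p1 [Hj1 [Hp1 ->]]]] [j2 [p2 [Hj2 [Hp2 ->]]]].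
    (* [j1 + p1 + j2 + p2 = (j1 + j2) + ((-j2 + p1 + j2) + p2)] *)
    exists (nadd j1 j2), (nadd (nadd (nadd (nopp j2) p1) j2) p2).
    split; [auto|split].
    + apply PD; auto. rewrite <- (nopp_involutive j2) at 2. apply PN; auto.
    + rewrite <- !nadd_assoc, nadd_oppr_cancel. reflexivity.
  - intros x [j [p [Hj [Hp ->]]]].
    exists (nopp j), (nadd (nadd j (nopp p)) (nopp j)).
    split; [auto|split]; [apply PN; auto|].
    rewrite nopp_nadd, <- !nadd_assoc, nadd_oppl_cancel. reflexivity.
  - intros x y [j [p [Hj [Hp ->]]]].
    exists (nadd (nadd y j) (nopp y)), (nadd (nadd y p) (nopp y)).
    split; [auto|split]; [auto|].
    rewrite <- !nadd_assoc, nadd_oppl_cancel. reflexivity.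
Qed.

Lemma add_set_ideal (J P : N -> Prop) :
  is_ideal N J -> is_ideal N P -> is_ideal N (add_set J P).
Proof.
  intros [HJ [JR JL]] [HP [PR PL]].
  split; [apply add_set_normal_subgroup; auto|split].
  - intros x n [j [p [Hj [Hp ->]]]]. exists (nmul j n), (nmul p n).
    rewrite nmulDl. auto.
  - intros x n m [j [p [Hj [Hp ->]]]].
    (* [n(m + (j + p)) - nm = A + B] with [A ∈ P], [B ∈ J]; write it as [B + (-B + A + B)]. *)
    set (A := nadd (nmul n (nadd (nadd m j) p)) (nopp (nmul n (nadd m j)))).
    set (B := nadd (nmul n (nadd m j)) (nopp (nmul n m))).
    destruct HP as [_ [_ [_ PN]]].
    exists B, (nadd (nadd (nopp B) A) (nopp (nopp B))).
    split; [apply JL; auto|split]; [apply PN, PL; auto|].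
    rewrite nopp_involutive, <- !nadd_assoc, nadd_oppr_cancel. unfold A, B.
    rewrite <- !nadd_assoc, nadd_oppl_cancel, nadd_assoc. reflexivity.
Qed.

Lemma prod_set_add_set_subset (I J P : N -> Prop) :
  is_ideal N P -> (forall i j, I i -> J j -> nmul i j = nzero) ->
  subset (prod_set I (add_set J P)) P.
Proof.
  intros [_ [_ PL]] HIJ x [i [k [Hi [[j [p [Hj [Hp ->]]]] ->]]]].
  assert (Hijp := PL p i j Hp).
  rewrite (HIJ i j Hi Hj), nopp_0, nadd_0r in Hijp. exact Hijp.
Qed.

Lemma prod_set_zero_colon (I K P : N -> Prop) :
  subset P K -> (forall x, prod_set I K x <-> zero_set x) ->
  subset I (colon zero_set P).
Proof.
  intros HPK HIK i Hi p Hp. apply HIK. exists i, p. auto.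
Qed.

End NearRingAdditive.

Arguments add_set {N}.

Section Graded.
Variables (G : monoid) (N : nearring) (Ns : G -> N -> Prop).
Hypothesis HNs : is_grading Ns.

Lemma homogeneous_comm (s t : G) (x y : N) :
  s <> t -> Ns s x -> Ns t y -> nadd x y = nadd y x.
Proof.
  intros Hst Hx Hy.
  destruct HNs as [HN [_ [_ Huniq]]].
  destruct (HN s) as [_ [SD [SO SN]]]. destruct (HN t) as [_ [TD [TO TN]]].
  set (c := nadd (nadd x y) (nadd (nopp x) (nopp y))).
  assert (Cs : Ns s c).
  { replace c with (nadd x (nadd (nadd y (nopp x)) (nopp y)))
      by (unfold c; rewrite <- !nadd_assoc; reflexivity).
    apply SD; auto. }
  assert (Ct : Ns t c).
  { replace c with (nadd (nadd (nadd x y) (nopp x)) (nopp y))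
      by (unfold c; rewrite <- !nadd_assoc; reflexivity).
    apply TD; auto. }
  assert (Hc : c = nzero).
  { assert (Hzero : Forall (fun p : G * N => snd p = nzero) [(s, c); (t, nopp c)]).
    { apply Huniq.
      - constructor; [simpl; intuition|constructor; [simpl; auto|constructor]].
      - constructor; [simpl; auto|constructor; [simpl; auto|constructor]].
      - unfold sumlist. simpl. rewrite nadd_0r, nadd_oppr. reflexivity. }
    inversion Hzero; auto. }
  unfold c in Hc. apply nopp_unique_l in Hc.
  rewrite Hc, nopp_nadd, !nopp_involutive. reflexivity.
Qed.

Lemma homogeneous_comm_sumlist (s : G) (a : N) (l : list (G * N)) :
  Ns s a -> Forall (fun p => Ns (fst p) (snd p)) l -> ~ In s (map fst l) ->
  nadd a (sumlist N (map snd l)) = nadd (sumlist N (map snd l)) a.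
Proof.
  intros Ha. induction l as [|[t b] l IH]; intros Hl Hs.
  - unfold sumlist; simpl. rewrite nadd_0l, nadd_0r. reflexivity.
  - inversion Hl; subst. simpl in *. unfold sumlist in *. simpl.
    rewrite nadd_assoc, (homogeneous_comm s t a b); auto.
    rewrite <- nadd_assoc, IH, nadd_assoc; auto.
Qed.

Lemma merge_homogeneous_components (K : N -> Prop) :
  (forall x y, K x -> K y -> K (nadd x y)) ->
  forall l : list (G * N), Forall (fun p => Ns (fst p) (snd p) /\ K (snd p)) l ->
  exists l', NoDup (map fst l') /\
    Forall (fun p => Ns (fst p) (snd p) /\ K (snd p)) l' /\
    sumlist N (map snd l) = sumlist N (map snd l').
Proof.
  intros KD. induction l as [|[s a] rest IH]; intros Hl.
  - exists []. simpl. repeat split; constructor.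
  - apply Forall_cons_iff in Hl. destruct Hl as [[Hsa Hka] Hrest].
    destruct (IH Hrest) as [l'' [Hnd [Hl'' Hsum]]].
    change (sumlist N (map snd ((s, a) :: rest)))
      with (nadd a (sumlist N (map snd rest))).
    rewrite Hsum.
    destruct (classic (In s (map fst l''))) as [Hin|Hnin].
    +
      apply in_map_iff in Hin. destruct Hin as [[s' b] [Hs' Hinb]].
      simpl in Hs'. subst s'.
      apply in_split in Hinb. destruct Hinb as [L1 [L2 ->]].
      rewrite map_app in Hnd. simpl in Hnd.
      assert (Hn1 : ~ In s (map fst L1)).
      { apply NoDup_remove_2 in Hnd. intro; apply Hnd, in_or_app; auto. }
      apply Forall_app in Hl''. destruct Hl'' as [F1 F2].
      apply Forall_cons_iff in F2. destruct F2 as [[Hsb Hkb] F2].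
      exists (L1 ++ (s, nadd a b) :: L2). split; [|split].
      * rewrite map_app. exact Hnd.
      * apply Forall_app. split; auto. constructor; auto. simpl. split; auto.
        destruct HNs as [HN _]. apply (HN s); auto.
      * rewrite !map_app, !sumlist_app. simpl.
        rewrite nadd_assoc, (homogeneous_comm_sumlist s); auto.
        -- rewrite <- !nadd_assoc. reflexivity.
        -- eapply Forall_impl; [|exact F1]. intros p [? ?]; auto.
    + exists ((s, a) :: l''). repeat split; simpl; auto; constructor; auto.
Qed.

Lemma graded_ideal_add_set (J P : N -> Prop) :
  graded_ideal Ns J -> graded_ideal Ns P -> graded_ideal Ns (add_set J P).
Proof.
  intros [HJ JG] [HP PG].
  assert (HJP : is_ideal N (add_set J P)) by (apply add_set_ideal; auto).
  assert (J0 : J nzero) by apply HJ.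
  assert (P0 : P nzero) by apply HP.
  split; [exact HJP|].
  intros x [j [p [Hj [Hp ->]]]].
  destruct (JG j Hj) as [lj [_ [Fj ->]]].
  destruct (PG p Hp) as [lp [_ [Fp ->]]].
  destruct (merge_homogeneous_components (add_set J P)) with (l := lj ++ lp)
    as [l [Hnd [Hl Hsum]]].
  - apply HJP.
  - apply Forall_app. split.
    + eapply Forall_impl; [|exact Fj]. intros q [? ?]. split; [|apply add_set_l]; auto.
    + eapply Forall_impl; [|exact Fp]. intros q [? ?]. split; [|apply add_set_r]; auto.
  - exists l. rewrite <- Hsum, map_app, sumlist_app. auto.
Qed.

End Graded.

Theorem proposition1 (G : monoid) (N : nearring) (Ns : G -> N -> Prop)
  (HNs : is_grading Ns) (P : N -> Prop) (HP : graded_ideal Ns P) :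
  graded_weakly_prime Ns P ->
  subset (colon zero_set P) P ->
  graded_prime Ns P.
Proof.
  intros [_ Hweak] Hcolon. split; [exact HP|].
  intros I J HI HJ HIJP.
  destruct (classic (forall x, prod_set I J x <-> zero_set x)) as [HIJ0|HIJ0];
    [|apply Hweak; auto].
  assert (HPideal : is_ideal N P) by apply HP.
  assert (J0 : J nzero) by apply HJ.
  assert (P0 : P nzero) by apply HPideal.
  assert (HK : graded_ideal Ns (add_set J P))
    by (apply graded_ideal_add_set; auto).
  assert (HIKP : subset (prod_set I (add_set J P)) P).
  { apply prod_set_add_set_subset; auto.
    intros i j Hi Hj. apply HIJ0. exists i, j. auto. }
  destruct (classic (forall x, prod_set I (add_set J P) x <-> zero_set x))
    as [HIK0|HIK0].
  - left. intros i Hi. apply Hcolon.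
    apply (prod_set_zero_colon N I (add_set J P)); auto.
    intros p. apply add_set_r; auto.
  - destruct (Hweak I (add_set J P) HI HK HIK0 HIKP) as [HIP|HKP];
      [left; exact HIP|].
    right. intros j Hj. apply HKP, add_set_l; auto.
Qed.
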